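(* Let $G$ be a Hausdorff topological group and $\beta\colon G\times Y\to Y$ a continuous global action on a topological space $Y$, and let $U$ be an open subset of $Y$. Let $\theta$ be the restriction of $\beta$ to $U$, i.e. the partial action with $U_g=U\cap\beta_g(U)$ and $\theta_g=\beta_g|_{U_{g^{-1}}}$. Then the enveloping space $U_G$ of $\theta$ is homeomorphic to an open subset of $Y$.
   Context: For a topological partial action $\theta=\{\theta_g\colon U_{g^{-1}}\to U_g\}$ on $U$, the enveloping space is $U_G=(G\times U)/R$ with the quotient topology, where $(g,x)R(h,y)$ iff $x\in U_{g^{-1}h}$ and $\theta_{h^{-1}g}(x)=y$. *)

From HB Require Import structures.
From mathcomp Require Import all_boot all_order all_algebra generic_quotient.
From mathcomp Require Import all_classical all_reals all_analysis.
Set Implicit Arguments. Unset Strict Implicit. Unset Printing Implicit Defensive.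
Local Open Scope classical_set_scope.

Definition is_group (G : Type) (mul : G -> G -> G) (inv : G -> G) (e : G) :=
  [/\ (forall a b c, mul a (mul b c) = mul (mul a b) c),
      (forall a, mul e a = a), (forall a, mul a e = a),
      (forall a, mul (inv a) a = e) & (forall a, mul a (inv a) = e)].

Definition is_action (G Y : Type) (mul : G -> G -> G) (e : G)
  (beta : G -> Y -> Y) :=
  (forall y, beta e y = y) /\ (forall g h y, beta (mul g h) y = beta g (beta h y)).

Definition restr_dom (G Y : Type) (beta : G -> Y -> Y) (U : set Y) (g : G)
  : set Y := U `&` (beta g @` U).
(* theta_g = beta_g restricted to U_{g^-1} *)
Definition restr_map (G Y : Type) (beta : G -> Y -> Y) (g : G) : Y -> Y :=
  beta g.

Definition env_relP (G Y : Type) (mul : G -> G -> G) (inv : G -> G)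
  (beta : G -> Y -> Y) (U : set Y) (p q : G * set_type U) : Prop :=
  restr_dom beta U (mul (inv p.1) q.1) (set_val p.2) /\
  restr_map beta (mul (inv q.1) p.1) (set_val p.2) = set_val q.2.

Arguments env_relP {G Y} mul inv beta U p q.

Definition env_rel (G Y : Type) (mul : G -> G -> G) (inv : G -> G)
  (beta : G -> Y -> Y) (U : set Y) : rel (G * set_type U) :=
  fun p q => `[< env_relP mul inv beta U p q >].
Arguments env_rel {G Y} mul inv beta U.

Section EnvEquiv.
Variables (G Y : Type) (mul : G -> G -> G) (inv : G -> G) (e : G)
  (beta : G -> Y -> Y) (U : set Y).
Hypotheses (hG : is_group mul inv e) (hA : is_action mul e beta).

Let assoc a b c : mul a (mul b c) = mul (mul a b) c. Proof. by case: hG. Qed.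
Let mul1 a : mul e a = a. Proof. by case: hG. Qed.
Let mulV a : mul (inv a) a = e. Proof. by case: hG. Qed.
Let mulVr a : mul a (inv a) = e. Proof. by case: hG. Qed.
Let act1 y : beta e y = y. Proof. by case: hA. Qed.
Let actM g h y : beta (mul g h) y = beta g (beta h y). Proof. by case: hA. Qed.

Let cancel3 a b c : mul (mul (inv a) b) (mul (inv b) c) = mul (inv a) c.
Proof. by rewrite -assoc (assoc b) mulVr mul1. Qed.

Lemma env_rel_refl : reflexive (env_rel mul inv beta U).
Proof.
Proof.
move=> [g x]; have Ux : U (set_val x) by apply: set_mem; case: x.
apply/asboolP; rewrite /env_relP /restr_dom /restr_map /=.
rewrite mulV act1; split=> //; split=> //; exists (set_val x) => //.
Qed.

Lemma env_rel_trans_aux p q r :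
  env_relP mul inv beta U p q -> env_relP mul inv beta U q r ->
  env_relP mul inv beta U p r.
Proof.
case: p q r => [g x] [h y] [k z].
have Uz : U (set_val z) by apply: set_mem; case: z.
rewrite /env_relP /restr_dom /restr_map /= => -[[Ux _] exy] [_ eyz].
have ezx : beta (mul (inv k) g) (set_val x) = set_val z.
  by rewrite -(cancel3 k h g) actM exy.
split=> //; split=> //; exists (set_val z) => //.
by rewrite -ezx -actM cancel3 mulV act1.
Qed.

Lemma env_rel_sym : symmetric (env_rel mul inv beta U).
Proof.
have H p q : env_relP mul inv beta U p q -> env_relP mul inv beta U q p.
  case: p q => [g x] [h y].
  have Uy : U (set_val y) by apply: set_mem; case: y.
  rewrite /env_relP /restr_dom /restr_map /= => -[[Ux _] exy].
  split; last by rewrite -exy -actM cancel3 mulV act1.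
  by split=> //; exists (set_val x).
by move=> p q; apply/asboolP/asboolP; apply: H.
Qed.

Lemma env_rel_trans : transitive (env_rel mul inv beta U).
Proof.
move=> q p r /asboolP hpq /asboolP hqr; apply/asboolP.
exact: env_rel_trans_aux hpq hqr.
Qed.

Definition env_equiv : equiv_rel (G * set_type U) :=
  EquivRel (env_rel mul inv beta U) env_rel_refl env_rel_sym env_rel_trans.
End EnvEquiv.

Definition enveloping_space (G Y : topologicalType) (mul : G -> G -> G)
  (inv : G -> G) (e : G) (beta : G -> Y -> Y) (U : set Y)
  (hG : is_group mul inv e) (hA : is_action mul e beta) : topologicalType :=
  quotient_topology {eq_quot (env_equiv U hG hA)}%qT.

Definition homeomorphic (X Z : topologicalType) : Prop :=
  exists (f : X -> Z) (g : Z -> X),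
    [/\ cancel f g, cancel g f, continuous f & continuous g].

From HB Require Import structures.
From mathcomp Require Import all_boot all_order all_algebra generic_quotient.
From mathcomp Require Import all_classical all_reals all_analysis.

(** The map (g, x) |-> beta_g x from G x U onto the saturation G.U of U is
    continuous and open (each beta_g is a homeomorphism of Y and U is open),
    and two pairs are R-related exactly when they have the same image.  A
    continuous open map induces a homeomorphism from the quotient by its
    kernel onto its image, which is open. *)

Set Implicit Arguments.
Unset Strict Implicit.
Unset Printing Implicit Defensive.
Local Open Scope classical_set_scope.
Local Open Scope quotient_scope.

Lemma open_set_val_image (T : topologicalType) (U : set T) (S : set (set_type U)) :
  open U -> open S -> open (set_val @` S).
Proof.
move=> oU [W oW <-]; rewrite (_ : _ @` _ = W `&` U); first exact: openI.
apply/seteqP; split=> [_ [x Wx <-]|y [Wy Uy]]; first by split=> //; exact: set_valP.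
by exists (exist (fun z => z \in U) y (mem_set Uy)).
Qed.

Section kernel_quotient.
Context {T Z : topologicalType} (r : equiv_rel T) (f : T -> Z).
Hypothesis f_cont : continuous f.
Hypothesis f_open : forall A, open A -> open (f @` A).
Hypothesis rE : forall p q, r p q <-> f p = f q.

Local Notation Q := (quotient_topology {eq_quot r}).

Let piE p q : \pi_Q p = \pi_Q q <-> f p = f q.
Proof. by rewrite -rE; split=> [/eqmodP|?]; last apply/eqmodP. Qed.

Lemma kernel_quotient_homeomorphic : homeomorphic Q (set_type (range f)).
Proof.
pose fbar (x : Q) : set_type (range f) :=
  exist (fun z => z \in range f) _ (mem_set (imageT f (repr x))).
have sec (y : set_type (range f)) : {p | f p = set_val y}.
  by apply: cid; rewrite set_valE; have [p _ <-] := set_valP y; exists p.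
pose gbar y : Q := \pi_Q (sval (sec y)).
exists fbar, gbar; split.
- move=> x; rewrite /gbar -[RHS]reprK; apply/piE.
  by rewrite (svalP (sec _)).
- move=> y; apply: val_inj; rewrite /= -[sval y]/(set_val y) -(svalP (sec y)).
  by apply/piE; rewrite reprK.
- apply: continuous_comp_initial; apply: repr_comp_continuous => //.
  by move=> p q /eqP/piE/eqP.
- apply/continuousP => B oB.
  rewrite (_ : _ @^-1` _ = set_val @^-1` (f @` (\pi_Q @^-1` B))).
    exact: (continuousP _).1 (@initial_continuous _ _ set_val) _ (f_open oB).
  apply/seteqP; split=> y /=; first by exists (sval (sec y)); rewrite ?(svalP (sec y)).
  case=> p Bp fpy; rewrite /gbar (_ : \pi_Q _ = \pi_Q p) //.
  by apply/piE; rewrite fpy (svalP (sec y)).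
Qed.

End kernel_quotient.

Section restricted_action.
Context {G Y : topologicalType} (mul : G -> G -> G) (inv : G -> G) (e : G).
Context (beta : G -> Y -> Y).
Hypotheses (hG : is_group mul inv e) (hA : is_action mul e beta).

Lemma actK a : cancel (beta a) (beta (inv a)).
Proof. by case: hG => _ _ _ mulV _; case: hA => act1 actM z; rewrite -actM mulV act1. Qed.

Lemma actVK a : cancel (beta (inv a)) (beta a).
Proof. by case: hG => _ _ _ _ mulVr; case: hA => act1 actM z; rewrite -actM mulVr act1. Qed.

Lemma env_relE (U : set Y) (p q : G * set_type U) :
  env_rel mul inv beta U p q <-> beta p.1 (set_val p.2) = beta q.1 (set_val q.2).
Proof.
case: p q => [g x] [h y]; have [_ actM] := hA.
rewrite /env_rel /env_relP /restr_dom /restr_map /=; split=> [/asboolP [_ <-]|E].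
  by rewrite actM actVK.
apply/asboolP; split; last by rewrite actM E actK.
split; first exact: set_valP.
by exists (set_val y); [exact: set_valP | rewrite actM -E actK].
Qed.

Hypothesis hbeta : continuous (fun p : G * Y => beta p.1 p.2).

Lemma open_act_image a (A : set Y) : open A -> open (beta a @` A).
Proof.
move=> oA; rewrite (_ : _ @` _ = beta (inv a) @^-1` A).
  exact: (continuousP _).1 ((continuous_curry hbeta).2 (inv a)) _ oA.
apply/seteqP; split=> [_ [z Az <-]|z Az] /=; first by rewrite actK.
by exists (beta (inv a) z); rewrite ?actVK.
Qed.

Variable U : set Y.
Hypothesis hU : open U.

Definition envelop_map (p : G * set_type U) : Y := beta p.1 (set_val p.2).

Lemma continuous_envelop_map : continuous envelop_map.
Proof.
move=> p; apply: (@continuous_comp _ _ _ (fun p => (p.1, set_val p.2))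
  (fun p : G * Y => beta p.1 p.2)); last exact: hbeta.
apply: cvg_pair; first exact: cvg_fst.
exact: (continuous_comp cvg_snd (@initial_continuous _ _ set_val _)).
Qed.

Lemma open_envelop_map (A : set (G * set_type U)) : open A -> open (envelop_map @` A).
Proof.
move=> oA; rewrite openE => _ [[g u] Agu <-].
have [[P S] /= [Pg Su] PSA] : nbhs (g, u) A by exact: open_nbhs_nbhs.
apply: (@filterS _ _ _ (beta g @` (set_val @` S°))).
  move=> _ [_ [v Sv <-] <-]; exists (g, v) => //.
  by apply: PSA; split => //; exact: nbhs_singleton.
apply: open_nbhs_nbhs; split.
  exact/open_act_image/open_set_val_image/open_interior.
by exists (set_val u) => //; exists u.
Qed.

End restricted_action.

Theorem lemma3p8 (G Y : topologicalType)
  (mul : G -> G -> G) (inv : G -> G) (e : G) (beta : G -> Y -> Y) (U : set Y)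
  (hG : is_group mul inv e)
  (hmul : continuous (fun p : G * G => mul p.1 p.2))
  (hinv : continuous inv)
  (hHaus : hausdorff_space G)
  (hA : is_action mul e beta)
  (hbeta : continuous (fun p : G * Y => beta p.1 p.2))
  (hU : open U) :
  exists V : set Y, open V /\
    homeomorphic (enveloping_space U hG hA) (set_type V).
Proof.
exists (range (@envelop_map _ _ beta U)); split.
  exact: (open_envelop_map hG hA hbeta hU openT).
apply: (kernel_quotient_homeomorphic (r := env_equiv U hG hA)).
- exact: (continuous_envelop_map hbeta).
- exact: (open_envelop_map hG hA hbeta hU).
- exact: (env_relE hG hA).
Qed.
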